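(* Let $F$ be Thompson's group with standard generators $x_0,x_1$. Let $g\in F$ and let $H=\langle x_0,(x_0x_1)^g\rangle$, where $(x_0x_1)^g=g^{-1}x_0x_1g$. Then $\mathrm{Cl}(H)=F$.
   Context: Thompson's group $F$ is the group of all piecewise linear homeomorphisms of $[0,1]$ with finitely many breakpoints, all at finite dyadic fractions, and all slopes integer powers of $2$. Composition is from left to right ($fg$ means first $f$, then $g$), and $a^g=g^{-1}ag$. Writing points of $(0,1)$ as binary expansions $.s$, $x_0$ maps $.00\alpha\mapsto .0\alpha$, $.01\alpha\mapsto .10\alpha$, $.1\alpha\mapsto .11\alpha$, and $x_1$ maps $.0\alpha\mapsto .0\alpha$, $.100\alpha\mapsto .10\alpha$, $.101\alpha\mapsto .110\alpha$, $.11\alpha\mapsto .111\alpha$, for every infinite binary word $\alpha$. For a subgroup $H\le F$, the closure $\mathrm{Cl}(H)$ is the subgroup of $F$ consisting of all piecewise-$H$ functions, i.e. all $f\in F$ for which there is a finite subdivision of $[0,1]$ into subintervals such that on each subinterval $f$ coincides with some element of $H$ (equivalently, the topological full group of $H$ acting on the finite dyadic fractions of $[0,1]$). *)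

From mathcomp Require Import all_boot all_order all_algebra.
From mathcomp Require Import reals.
Set Implicit Arguments. Unset Strict Implicit. Unset Printing Implicit Defensive.
Import Order.TTheory GRing.Theory Num.Theory.
Local Open Scope ring_scope.

Section Thompson.
Variable R : realType.

Definition dyadic (x : R) : Prop := exists (m : int) (n : nat), x = m%:~R / 2 ^+ n.

Definition is_subdiv (bs : seq R) : Prop :=
  [/\ sorted <%R bs, head 1 bs = 0 & last 0 bs = 1].

Definition pieces (bs : seq R) : seq (R * R) := zip bs (behead bs).

(* Elements of F: maps R -> R, only their restriction to [0,1] matters.
   f is piecewise linear with dyadic breakpoints (contained in bs) and slopes
   integer powers of 2, with f 0 = 0 and f 1 = 1 (the pieces glue continuously
   since consecutive pieces share their endpoint). *)
Definition inF (f : R -> R) : Prop :=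
  f 0 = 0 /\ f 1 = 1 /\
  exists bs : seq R, is_subdiv bs /\ (forall x, x \in bs -> dyadic x) /\
    (forall a b, (a, b) \in pieces bs ->
       exists (k : int) (c : R), forall x, a <= x <= b -> f x = 2 ^ k * x + c).

Definition x0 (x : R) : R :=
  if x <= 1/4 then 2 * x
  else if x <= 1/2 then x + 1/4
  else x / 2 + 1/2.

Definition x1 (x : R) : R :=
  if x <= 1/2 then x
  else if x <= 5/8 then 2 * x - 1/2
  else if x <= 3/4 then x + 1/8
  else x / 2 + 1/2.

(* Composition is left to right: the product s h is "first s, then h",
   i.e. the map x |-> h (s x).  Elements are identified when they agree on [0,1]. *)
Inductive gen (S : (R -> R) -> Prop) : (R -> R) -> Prop :=
| gen_id : gen S id
| gen_ext h h' : gen S h -> (forall x, 0 <= x <= 1 -> h' x = h x) -> gen S h'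
| gen_mul s h : S s -> gen S h -> gen S (fun x => h (s x))
| gen_inv s t h : S s -> inF t -> (forall x, 0 <= x <= 1 -> t (s x) = x) ->
    gen S h -> gen S (fun x => h (t x)).

(* the generating set {x_0, (x_0 x_1)^g} with (x_0x_1)^g = g^-1 x_0 x_1 g:
   s is the conjugate iff s (g x) = g (x1 (x0 x)) for x in [0,1]
   (g is a bijection of [0,1], so this determines s on [0,1]). *)
Definition Hgens (g : R -> R) (s : R -> R) : Prop :=
  (forall x, 0 <= x <= 1 -> s x = x0 x) \/
  (forall x, 0 <= x <= 1 -> s (g x) = g (x1 (x0 x))).

Definition Cl (H : (R -> R) -> Prop) (f : R -> R) : Prop :=
  inF f /\ exists bs : seq R, is_subdiv bs /\
    (forall a b, (a, b) \in pieces bs ->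
       exists h, H h /\ forall x, a <= x <= b -> f x = h x).

End Thompson.

From mathcomp Require Import all_boot all_order all_algebra.
From mathcomp Require Import reals.
From mathcomp.algebra_tactics Require Import ring lra.
From mathcomp Require Import zify.
Set Implicit Arguments. Unset Strict Implicit. Unset Printing Implicit Defensive.
Import Order.TTheory GRing.Theory Num.Theory.
Local Open Scope ring_scope.

(* Encode the standard dyadic interval [.u000..., .u111...] by the binary word u.
   Every f in F maps each standard dyadic interval of some fixed depth affinely
   onto a standard dyadic interval, and since f fixes 0 and 1 the words of an
   interval and of its image contain the same letters. Write u ~ v when the affine map from the interval
   of u onto that of v agrees, on each subinterval uw with w long enough, with
   an element of H. This is an equivalence relation compatible with appending
   letters; x0 gives 00 ~ 0, 01 ~ 10 and 1 ~ 11, x0x1 gives 010 ~ 10 and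
   011 ~ 110, and these relations already identify any two nonempty words with
   the same letters. So Cl(H) = F as soon as x0x1 agrees with an element of H
   on [1/4, 1/2].
   Let y = g o x0x1 o g^-1 (composing right to left). Near 0, g is linear and
   x0x1 doubles, so g = y^n o x0^-k on [0, 1/2]; near 1, g is affine and
   x0x1 = x0^2, so y^m o g = x0^p on [1/2, 1]. As x0x1 maps [1/4, 1/2] into
   [1/2, 1], there x0x1 = x0^-p o y^m o g o x0x1 = x0^-p o y^(m+1+n) o x0^-k. *)

(** * Binary words and dyadic cells *)

Fixpoint binval (w : seq bool) : nat :=
  if w is b :: w' then (b * 2 ^ size w' + binval w')%N else 0%N.

Lemma binval_lt w : (binval w < 2 ^ size w)%N.
Proof. by elim: w => [//|b w IH] /=; rewrite expnS; case: b => /=; lia. Qed.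

Lemma binval_cat u w : binval (u ++ w) = (binval u * 2 ^ size w + binval w)%N.
Proof. by elim: u => [//|b u IH] /=; rewrite IH size_cat expnD; case: b => /=; lia. Qed.

Lemma binval_surj n i : (i < 2 ^ n)%N -> exists2 u, size u = n & binval u = i.
Proof.
elim: n i => [|n IH] i hi; first by exists [::] => //=; move: hi; rewrite expn0; lia.
rewrite expnS in hi; case: (ltnP i (2 ^ n)) => h.
  by have [u su iu] := IH i h; exists (false :: u); rewrite /= ?su ?iu.
have [u su iu] := IH (i - 2 ^ n)%N ltac:(lia).
by exists (true :: u); rewrite /= ?su ?iu //; lia.
Qed.

Lemma binval_inj u v : size u = size v -> binval u = binval v -> u = v.
Proof.
elim: u v => [|a u IH] [|b v] //= [] suv e.
have hu := binval_lt u; have hv := binval_lt v; rewrite suv in e hu.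
case: a b e => [] [] /= e; try lia.
  by rewrite (IH v suv) //; lia.
by rewrite (IH v suv).
Qed.

Lemma binval_nseq0 n : binval (nseq n false) = 0%N.
Proof. by elim: n. Qed.

Lemma binval_nseq1 n : binval (nseq n true) = (2 ^ n).-1.
Proof. by elim: n => [//|n IH] /=; rewrite size_nseq IH expnS; have := expn_gt0 2 n; lia. Qed.

Lemma binval_eq0 u : binval u = 0%N -> true \notin u.
Proof.
elim: u => [//|b u IH] /=; rewrite in_cons; case: b => /=; last exact: IH.
by have := expn_gt0 2 (size u); lia.
Qed.

Lemma binval_eq_max u : binval u = (2 ^ size u).-1 -> false \notin u.
Proof.
elim: u => [//|b u IH] /=; rewrite in_cons expnS; have := binval_lt u.
by case: b => /= h e; [apply: IH | ]; lia.
Qed.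

Lemma nseq_notin (b : bool) u : b \notin u -> u = nseq (size u) (~~ b).
Proof.
elim: u => [//|c u IH] /=; rewrite in_cons negb_or => /andP [bc /IH <-].
by case: b c bc {IH} => [] [].
Qed.

Section Thompson.
Variable R : realType.
Implicit Types (u v w : seq bool) (x y z : R) (f h : R -> R).

Lemma pow2_gt0 n : 0 < (2 : R) ^+ n.
Proof. by rewrite exprn_gt0. Qed.

Lemma pow2_neq0 n : (2 : R) ^+ n != 0.
Proof. by rewrite gt_eqF // pow2_gt0. Qed.

Lemma pow2_ge1 n : 1 <= (2 : R) ^+ n.
Proof. by apply: exprn_ege1; lra. Qed.

Ltac pow2_field := field; rewrite ?pow2_neq0 ?andbT //.

Lemma natr_pow2 n : (2 ^ n)%:R = (2 : R) ^+ n.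
Proof. by rewrite natrX. Qed.

Definition in01 x := 0 <= x <= 1.

Lemma in01_0 : in01 (0 : R).
Proof. by rewrite /in01 lexx ler01. Qed.

Lemma in01_1 : in01 (1 : R).
Proof. by rewrite /in01 lexx ler01. Qed.

Definition cell_lo u : R := (binval u)%:R / 2 ^+ size u.
Definition cell_hi u : R := (binval u).+1%:R / 2 ^+ size u.
Definition in_cell u x := cell_lo u <= x <= cell_hi u.
Definition cell_map u v x := cell_lo v + (x - cell_lo u) * (2 ^+ size u / 2 ^+ size v).

Lemma cell_lo_ge0 u : 0 <= cell_lo u.
Proof. by rewrite divr_ge0 // ltW // pow2_gt0. Qed.

Lemma cell_hi_le1 u : cell_hi u <= 1.
Proof. by rewrite ler_pdivrMr ?pow2_gt0 // mul1r -natr_pow2 ler_nat binval_lt. Qed.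

Lemma cell_hiE u : cell_hi u = cell_lo u + 1 / 2 ^+ size u.
Proof. by rewrite /cell_hi /cell_lo -natr1; pow2_field. Qed.

Lemma cell_lo_lt_hi u : cell_lo u < cell_hi u.
Proof. by rewrite cell_hiE ltrDl divr_gt0 ?pow2_gt0. Qed.

Lemma cell_lo_cat u w : cell_lo (u ++ w) = cell_lo u + cell_lo w / 2 ^+ size u.
Proof.
rewrite /cell_lo binval_cat size_cat natrD natrM natr_pow2 exprD.
by pow2_field.
Qed.

Lemma in_cell_lo u : in_cell u (cell_lo u).
Proof. by rewrite /in_cell lexx ltW // cell_lo_lt_hi. Qed.

Lemma in_cell_hi u : in_cell u (cell_hi u).
Proof. by rewrite /in_cell lexx ltW // cell_lo_lt_hi. Qed.

Lemma in_cell_in01 u x : in_cell u x -> in01 x.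
Proof.
case/andP => h1 h2; apply/andP; split; first exact: le_trans (cell_lo_ge0 u) h1.
exact: le_trans h2 (cell_hi_le1 u).
Qed.

Lemma in_cell_catl u w x : in_cell (u ++ w) x -> in_cell u x.
Proof.
rewrite /in_cell !cell_hiE !cell_lo_cat size_cat exprD => /andP [h1 h2].
have e0 := cell_lo_ge0 w; have e1 := cell_hi_le1 w; rewrite cell_hiE in e1.
have p1 := pow2_gt0 (size u); have p2 := pow2_gt0 (size w).
apply/andP; split; first by apply: le_trans h1; rewrite lerDl divr_ge0 // ltW.
apply: (le_trans h2); rewrite -addrA lerD2l.
have -> : cell_lo w / 2 ^+ size u + 1 / (2 ^+ size u * 2 ^+ size w) =
          (cell_lo w + 1 / 2 ^+ size w) / 2 ^+ size u by pow2_field.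
by rewrite ler_pM2r ?invr_gt0.
Qed.

Lemma cell_lo_nseq0 n : cell_lo (nseq n false) = 0.
Proof. by rewrite /cell_lo binval_nseq0 mul0r. Qed.

Lemma cell_hi_nseq0 n : cell_hi (nseq n false) = 1 / 2 ^+ n.
Proof. by rewrite cell_hiE cell_lo_nseq0 add0r size_nseq. Qed.

Lemma cell_hi_nseq1 n : cell_hi (nseq n true) = 1.
Proof.
by rewrite /cell_hi binval_nseq1 prednK ?expn_gt0 // size_nseq natr_pow2 divff ?pow2_neq0.
Qed.

Lemma cell_lo_nseq1 n : cell_lo (nseq n true) = 1 - 1 / 2 ^+ n.
Proof. by have := cell_hiE (nseq n true); rewrite cell_hi_nseq1 size_nseq => e; lra. Qed.

Lemma cell_lo_eq0 u : (cell_lo u == 0) = (true \notin u).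
Proof.
apply/eqP/idP => [|/nseq_notin ->]; last exact: cell_lo_nseq0.
rewrite /cell_lo => /eqP; rewrite mulf_eq0 invr_eq0 (negbTE (pow2_neq0 _)) orbF pnatr_eq0 => /eqP.
exact: binval_eq0.
Qed.

Lemma cell_hi_eq1 u : (cell_hi u == 1) = (false \notin u).
Proof.
apply/eqP/idP => [|/nseq_notin ->].
  rewrite /cell_hi => /(congr1 ( *%R^~ (2 ^+ size u))); rewrite divfK ?pow2_neq0 // mul1r.
  by rewrite -natr_pow2 => /eqP; rewrite eqr_nat => /eqP e; apply: binval_eq_max; rewrite -e.
exact: cell_hi_nseq1.
Qed.

Lemma cell_interior_eq u v x : size u = size v -> in_cell u x ->
  cell_lo v < x < cell_hi v -> u = v.
Proof.
move=> suv /andP [h1 h2]; rewrite /cell_lo /cell_hi -suv => /andP [h3 h4].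
have lt_nat a b : (a%:R / 2 ^+ size u < b.+1%:R / 2 ^+ size u :> R) -> (a <= b)%N.
  by rewrite ltr_pM2r ?invr_gt0 ?pow2_gt0 // ltr_nat ltnS.
apply: binval_inj => //; apply/eqP; rewrite eqn_leq.
by rewrite !lt_nat // ?(le_lt_trans h1 h4) ?(lt_le_trans h3 h2).
Qed.

Lemma cell_mid_interior w n : (n <= size w)%N ->
  cell_lo (take n w) < cell_lo (w ++ [:: true]) < cell_hi (take n w).
Proof.
move=> hn.
have sub x : in_cell w x -> in_cell (take n w) x.
  by rewrite -{1}(cat_take_drop n w); exact: in_cell_catl.
have [/andP [h1 _] /andP [_ h2]] := (sub _ (in_cell_lo w), sub _ (in_cell_hi w)).
have e : cell_lo (w ++ [:: true]) = cell_lo w + (1 / 2) / 2 ^+ size w.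
  by rewrite cell_lo_cat /cell_lo /= expr1.
have p := pow2_gt0 (size w).
apply/andP; split; [apply: le_lt_trans h1 _ | apply: lt_le_trans h2].
  by rewrite e ltrDl divr_gt0 //; lra.
by rewrite e cell_hiE ltrD2l ltr_pM2r ?invr_gt0 //; lra.
Qed.

Lemma cell_map_cat u v w x : cell_map (u ++ w) (v ++ w) x = cell_map u v x.
Proof. by rewrite /cell_map !cell_lo_cat !size_cat !exprD; pow2_field. Qed.

Lemma cell_map_lo u v : cell_map u v (cell_lo u) = cell_lo v.
Proof. by rewrite /cell_map subrr mul0r addr0. Qed.

Lemma cell_map_hi u v : cell_map u v (cell_hi u) = cell_hi v.
Proof. by rewrite /cell_map !cell_hiE addrAC subrr add0r; pow2_field. Qed.

Lemma cell_map_hiE u v x :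
  cell_map u v x = cell_hi v + (x - cell_hi u) * (2 ^+ size u / 2 ^+ size v).
Proof. by rewrite /cell_map !cell_hiE; pow2_field. Qed.

Lemma cell_map_comp u v w x : cell_map v w (cell_map u v x) = cell_map u w x.
Proof. by rewrite /cell_map; pow2_field. Qed.

Lemma cell_map_id u x : cell_map u u x = x.
Proof. by rewrite /cell_map divff ?pow2_neq0 // mulr1 addrC subrK. Qed.

Lemma cell_mapK u v : cancel (cell_map u v) (cell_map v u).
Proof. by move=> x; rewrite cell_map_comp cell_map_id. Qed.

Lemma cell_map_lt u v x y : x < y -> cell_map u v x < cell_map u v y.
Proof. by move=> xy; rewrite ltrD2l ltr_pM2r ?divr_gt0 ?pow2_gt0 // ltrD2r. Qed.

Lemma cell_map_le u v x y : x <= y -> cell_map u v x <= cell_map u v y.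
Proof. by move=> xy; rewrite lerD2l ler_pM2r ?divr_gt0 ?pow2_gt0 // lerD2r. Qed.

Lemma in_cell_map u v x : in_cell u x -> in_cell v (cell_map u v x).
Proof.
case/andP => h1 h2; apply/andP; split; first by rewrite -(cell_map_lo u v) cell_map_le.
by rewrite -(cell_map_hi u v) cell_map_le.
Qed.

Definition grid N k : R := k%:R / 2 ^+ N.

Lemma grid0 N : grid N 0 = 0.
Proof. by rewrite /grid mul0r. Qed.

Lemma grid_max N : grid N (2 ^ N) = 1.
Proof. by rewrite /grid natr_pow2 divff // pow2_neq0. Qed.

Lemma grid_lt N i j : (i < j)%N -> grid N i < grid N j.
Proof. by move=> h; rewrite ltr_pM2r ?invr_gt0 ?pow2_gt0 // ltr_nat. Qed.

Lemma grid_dyadic N k : dyadic (grid N k).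
Proof. by exists (Posz k), N; rewrite /grid pmulrn. Qed.

Lemma cell_grid N k : (k < 2 ^ N)%N ->
  exists2 u, size u = N & cell_lo u = grid N k /\ cell_hi u = grid N k.+1.
Proof. by case/binval_surj => u su iu; exists u => //; rewrite /cell_lo /cell_hi /grid su iu. Qed.

Lemma chain_cover (p : nat -> R) n z : p 0%N <= z <= p n.+1 ->
  exists2 k, (k <= n)%N & p k <= z <= p k.+1.
Proof.
elim: n => [|n IH] /andP [z0 zn]; first by exists 0%N; rewrite // z0 zn.
case: (leP z (p n.+1)) => h; last by exists n.+1; rewrite // zn ltW.
by have [k kn hk] := IH ltac:(by rewrite z0 h); exists k => //; exact: leqW.
Qed.

Lemma grid_chain_cover (p : nat -> R) N z : p 0%N <= z <= p (2 ^ N)%N ->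
  exists2 k, (k < 2 ^ N)%N & p k <= z <= p k.+1.
Proof.
have e := prednK (expn_gt0 2 N).
by rewrite -e => /chain_cover [k hk hz]; exists k; rewrite // -e ltnS.
Qed.

Lemma in_cell_exists N x : in01 x -> exists2 u, size u = N & in_cell u x.
Proof.
rewrite /in01 -{1}(grid0 N) -(grid_max N) => /grid_chain_cover [k /cell_grid [u su [lo hi]] hx].
by exists u; rewrite // /in_cell lo hi.
Qed.

Definition grid_subdiv N : seq R := [seq grid N i | i <- iota 0 (2 ^ N).+1].

Lemma pieces_map_iota (p : nat -> R) n :
  pieces [seq p i | i <- iota 0 n.+1] = [seq (p i, p i.+1) | i <- iota 0 n].
Proof.
rewrite /pieces; move: 0%N; elim: n => [//|n IH] m /=.
by rewrite -IH.
Qed.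

Lemma last_map_iota (p : nat -> R) x n : last x [seq p i | i <- iota 0 n.+1] = p n.
Proof.
suff gen m : last x [seq p i | i <- iota m n.+1] = p (m + n)%N by rewrite gen.
elim: n m x => [|n IH] m x; first by rewrite /= addn0.
by rewrite (_ : iota m n.+2 = m :: iota m.+1 n.+1) // map_cons last_cons IH addSnnS.
Qed.

Lemma grid_subdivP N : is_subdiv (grid_subdiv N).
Proof.
split; last by rewrite last_map_iota grid_max.
  by apply: (homo_sorted (@grid_lt N)); exact: iota_ltn_sorted.
by rewrite /= grid0.
Qed.

Lemma grid_subdiv_pieces N a b : (a, b) \in pieces (grid_subdiv N) ->
  exists2 u, size u = N & a = cell_lo u /\ b = cell_hi u.
Proof.
rewrite pieces_map_iota => /mapP [i]; rewrite mem_iota add0n => /andP [_ /cell_grid].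
by case=> u su [lu hu] [-> ->]; exists u.
Qed.

(** * Maps that are affine on cells *)

Definition cell_affine u (f : R -> R) v := forall x, in_cell u x -> f x = cell_map u v x.
Definition cellwise N (f : R -> R) := forall u, size u = N -> exists v, cell_affine u f v.

Lemma cell_affine_cat u v w f : cell_affine u f v -> cell_affine (u ++ w) f (v ++ w).
Proof. by move=> h x hx; rewrite cell_map_cat; apply/h/(in_cell_catl hx). Qed.

Lemma cell_affine_take N u f v : cell_affine (take N u) f v ->
  cell_affine u f (v ++ drop N u).
Proof. by move=> /(cell_affine_cat (w := drop N u)); rewrite cat_take_drop. Qed.

Lemma cellwise_addn N d f : cellwise N f -> cellwise (N + d) f.
Proof.
move=> h u su; have [|v hv] := h (take N u); first by rewrite size_takel // su leq_addr.
by exists (v ++ drop N u); exact: cell_affine_take.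
Qed.

Lemma cellwise_comp N M k f : cellwise N k -> cellwise M f -> cellwise (N + M) (f \o k).
Proof.
move=> hk hf u su; have [|v1 h1] := hk (take N u); first by rewrite size_takel // su leq_addr.
set w := v1 ++ drop N u.
have [|z h2] := hf (take M w).
  by rewrite size_takel // size_cat size_drop su addKn leq_addl.
exists (z ++ drop M w) => x hx /=.
rewrite (cell_affine_take h1) // (cell_affine_take h2) ?cell_map_comp //.
exact: in_cell_map.
Qed.

Definition increasing_on (a b : R) f := forall x y, a <= x -> x < y -> y <= b -> f x < f y.

Lemma increasing_on_le a b f x y :
  increasing_on a b f -> a <= x -> x <= y -> y <= b -> f x <= f y.
Proof. by move=> h ax; rewrite le_eqVlt => /orP [/eqP -> //|xy] yb; exact/ltW/h. Qed.

Lemma increasing_on_chain (p : nat -> R) n f :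
  (forall k, (k < n)%N -> increasing_on (p k) (p k.+1) f) -> increasing_on (p 0%N) (p n) f.
Proof.
elim: n => [|n IH] h x y ax xy yb.
  by have := lt_le_trans (le_lt_trans ax xy) yb; rewrite ltxx.
have h1 := IH (fun k hk => h k (ltnW hk)); have h2 := h n (ltnSn n).
case: (leP y (p n)) => yn; first exact: h1.
case: (leP (p n) x) => nx; first exact: h2.
by apply: (@lt_trans _ _ (f (p n))); [exact: h1 | exact: h2].
Qed.

Lemma cells_increasing N f :
  (forall u, size u = N -> increasing_on (cell_lo u) (cell_hi u) f) -> increasing_on 0 1 f.
Proof.
move=> h; rewrite -(grid0 N) -(grid_max N) -(prednK (expn_gt0 2 N)).
apply: increasing_on_chain => k hk.
have [|u su [<- <-]] := cell_grid (N := N) (k := k); last exact: h.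
by rewrite -(prednK (expn_gt0 2 N)).
Qed.

Lemma cell_affine_increasing u f v :
  cell_affine u f v -> increasing_on (cell_lo u) (cell_hi u) f.
Proof.
move=> h x y lx xy yh.
have hx : in_cell u x by rewrite /in_cell lx (le_trans (ltW xy) yh).
have hy : in_cell u y by rewrite /in_cell yh (le_trans lx (ltW xy)).
by rewrite !h //; exact: cell_map_lt.
Qed.

Lemma cell_affine_surj u f v z : cell_affine u f v ->
  f (cell_lo u) <= z <= f (cell_hi u) -> exists2 x, in_cell u x & f x = z.
Proof.
move=> h; rewrite !h ?in_cell_lo ?in_cell_hi // cell_map_lo cell_map_hi => hz.
have hx : in_cell u (cell_map v u z) by exact: in_cell_map.
by exists (cell_map v u z); rewrite // h // cell_mapK.
Qed.

Lemma cellwise_increasing N f : cellwise N f -> increasing_on 0 1 f.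
Proof.
move=> hf; apply: (@cells_increasing N) => u /hf [v hv].
exact: cell_affine_increasing hv.
Qed.

Lemma cellwise_surj N f z : cellwise N f -> f 0 <= z <= f 1 -> exists2 x, in01 x & f x = z.
Proof.
move=> hf; rewrite -{1}(grid0 N) -(grid_max N).
case/(grid_chain_cover (p := fun k => f (grid N k))) => k /cell_grid [u su [hlo hhi]] hz.
have [v hv] := hf u su.
have [|x hx fx] := cell_affine_surj (z := z) hv; first by rewrite hlo hhi.
by exists x => //; exact: in_cell_in01 hx.
Qed.

Definition inverse01 f fi :=
  (forall x, in01 x -> in01 (f x) /\ fi (f x) = x) /\
  (forall z, in01 z -> in01 (fi z) /\ f (fi z) = z).

Lemma increasing_inverse01 f : increasing_on 0 1 f -> f 0 = 0 -> f 1 = 1 ->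
  (forall z, in01 z -> exists2 x, in01 x & f x = z) -> exists fi, inverse01 f fi.
Proof.
move=> inc f0 f1 surj.
have [fi hfi] : {fi & forall z, in01 z -> in01 (fi z) /\ f (fi z) = z}.
  apply: (@boolp.choice _ _ (fun z x => in01 z -> in01 x /\ f x = z)) => z.
  have [/surj [x hx fx]|nz] := boolP (in01 z); first by exists x.
  by exists 0.
have f01 x : in01 x -> in01 (f x).
  case/andP => x0 x1; rewrite /in01 -{1}f0 -f1.
  by rewrite !(increasing_on_le inc) ?lexx.
exists fi; split => // x hx; split; first exact: f01.
have [hy fy] := hfi _ (f01 x hx); move: hx hy fy.
move: (fi (f x)) => y /andP [x0 x1] /andP [y0 y1].
case: (ltgtP x y) => // [xy|yx] e.
  by have := inc x y x0 xy y1; rewrite e ltxx.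
by have := inc y x y0 yx x1; rewrite e ltxx.
Qed.

Lemma words_bound (P : seq bool -> nat -> Prop) N :
  (forall u, size u = N -> exists m, P u m) ->
  exists M, forall u, size u = N -> exists2 m, (m <= M)%N & P u m.
Proof.
elim: N P => [|N IH] P h.
  by have [m hm] := h [::] erefl; exists m => u /size0nil ->; exists m.
have [M0 h0] := IH (fun u => P (false :: u)) (fun u su => h (_ :: u) (congr1 succn su)).
have [M1 h1] := IH (fun u => P (true :: u)) (fun u su => h (_ :: u) (congr1 succn su)).
exists (maxn M0 M1) => [[//|[] u]] /= [su].
  by have [m hm pm] := h1 u su; exists m => //; exact: leq_trans hm (leq_maxr _ _).
by have [m hm pm] := h0 u su; exists m => //; exact: leq_trans hm (leq_maxl _ _).
Qed.

(* The midpoint of a cell w lies in the image v of a cell u of f; by size, v is a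
   prefix of w, so the inverse maps w affinely onto a subcell of u. *)
Lemma cellwise_inverse N f fi : cellwise N f -> inverse01 f fi -> exists M, cellwise M fi.
Proof.
move=> hf [fK fiK].
have [M hM] : exists M, forall u, size u = N ->
    exists2 m, (m <= M)%N & exists2 v, size v = m & cell_affine u f v.
  by apply: words_bound => u /hf [v hv]; exists (size v), v.
exists M => w sw.
set z := cell_lo (w ++ [:: true]).
have [hx fz] := fiK z (in_cell_in01 (in_cell_catl (in_cell_lo _))).
have [u su hu] := in_cell_exists N hx.
have [m mM [v sv hv]] := hM u su.
have zv : in_cell v z by rewrite -fz hv //; exact: in_cell_map.
have svw : (size v <= size w)%N by rewrite sv sw.
have ew : w = v ++ drop (size v) w.
  rewrite -{1}(cat_take_drop (size v) w); congr (_ ++ _); apply: esym.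
  by apply: cell_interior_eq zv (cell_mid_interior svw); rewrite size_takel.
exists (u ++ drop (size v) w) => z'; rewrite {1 2}ew cell_map_cat => /in_cell_catl hz'.
have hx' : in_cell u (cell_map v u z') by exact: in_cell_map.
have e : f (cell_map v u z') = z' by rewrite hv // cell_mapK.
by rewrite -{1}e (fK _ (in_cell_in01 hx')).2.
Qed.

Lemma cellwise_near0 N f : cellwise N f -> f 0 = 0 ->
  exists m, forall x, 0 <= x <= 1 / 2 ^+ N -> f x = x * (2 ^+ N / 2 ^+ m).
Proof.
move=> hf f0; have [v hv] := hf (nseq N false) (size_nseq _ _).
have lv : cell_lo v = 0.
  by rewrite -(cell_map_lo (nseq N false)) -hv ?in_cell_lo // cell_lo_nseq0.
exists (size v) => x hx; rewrite hv; last by rewrite /in_cell cell_lo_nseq0 cell_hi_nseq0.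
by rewrite /cell_map lv cell_lo_nseq0 size_nseq add0r subr0.
Qed.

Lemma cellwise_near1 N f : cellwise N f -> f 1 = 1 ->
  exists m, forall x, 1 - 1 / 2 ^+ N <= x <= 1 -> f x = 1 + (x - 1) * (2 ^+ N / 2 ^+ m).
Proof.
move=> hf f1; have [v hv] := hf (nseq N true) (size_nseq _ _).
have hiv : cell_hi v = 1.
  by rewrite -(cell_map_hi (nseq N true)) -hv ?in_cell_hi // cell_hi_nseq1.
exists (size v) => x hx; rewrite hv; last by rewrite /in_cell cell_lo_nseq1 cell_hi_nseq1.
by rewrite cell_map_hiE hiv cell_hi_nseq1 size_nseq.
Qed.

Lemma exprz_pow2_ratio (a b : nat) : exists k : int, (2 : R) ^ k = 2 ^+ a / 2 ^+ b.
Proof.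
case: (leqP b a) => h.
  by exists (Posz (a - b)); rewrite -[in RHS](subnK h) exprD mulfK ?pow2_neq0.
exists (Negz (b - a).-1).
have -> : (2 : R) ^ Negz (b - a).-1 = (2 ^+ (b - a).-1.+1)^-1 by [].
by rewrite prednK ?subn_gt0 // -[in RHS](subnK (ltnW h)) exprD; pow2_field.
Qed.

Lemma cellwise_inF N f : cellwise N f -> f 0 = 0 -> f 1 = 1 -> inF f.
Proof.
move=> hf f0 f1; split => //; split => //.
exists (grid_subdiv N); split; first exact: grid_subdivP.
split; first by move=> x /mapP [i _ ->]; exact: grid_dyadic.
move=> a b /grid_subdiv_pieces [u su [-> ->]]; have [v hv] := hf u su.
have [k hk] := exprz_pow2_ratio (size u) (size v).
exists k, (cell_lo v - cell_lo u * (2 ^+ size u / 2 ^+ size v)) => x hx.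
by rewrite hv // /cell_map hk; ring.
Qed.

(** * Elements of F are cellwise affine *)

Definition dyadic_at n x := exists m : int, x = m%:~R / 2 ^+ n.

Lemma dyadic_at_le n d x : (n <= d)%N -> dyadic_at n x -> dyadic_at d x.
Proof.
move=> /subnK <- [m ->]; exists (m * (2 ^ (d - n))%N%:Z).
by rewrite intrM -pmulrn natr_pow2 exprD; pow2_field.
Qed.

Lemma dyadic_atP x : dyadic x -> exists n, dyadic_at n x.
Proof. by move=> [m [n ->]]; exists n, m. Qed.

Lemma dyadic_at_common x y : dyadic x -> dyadic y -> exists n, dyadic_at n x /\ dyadic_at n y.
Proof.
move=> /dyadic_atP [n1 h1] /dyadic_atP [n2 h2]; exists (n1 + n2)%N.
by split; [apply: dyadic_at_le h1 | apply: dyadic_at_le h2]; rewrite ?leq_addr ?leq_addl.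
Qed.

Lemma dyadicB x y : dyadic x -> dyadic y -> dyadic (x - y).
Proof.
move=> hx hy; have [n [[m1 ->] [m2 ->]]] := dyadic_at_common hx hy.
by exists (m1 - m2), n; rewrite intrB mulrBl.
Qed.

Lemma dyadicD x y : dyadic x -> dyadic y -> dyadic (x + y).
Proof.
move=> hx hy; have [n [[m1 ->] [m2 ->]]] := dyadic_at_common hx hy.
by exists (m1 + m2), n; rewrite intrD mulrDl.
Qed.

Lemma exprz_pow2_split (k : int) : exists p q : nat, (2 : R) ^ k = 2 ^+ p / 2 ^+ q.
Proof.
case: k => [p|n]; first by exists p, 0%N; rewrite expr0 divr1.
by exists 0%N, n.+1; rewrite expr0 div1r.
Qed.

Lemma dyadic_scale (k : int) x : dyadic x -> dyadic (2 ^ k * x).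
Proof.
have [p [q ->]] := exprz_pow2_split k; move=> [m [n ->]].
exists (m * (2 ^ p)%N%:Z), (n + q)%N.
by rewrite intrM -pmulrn natr_pow2 exprD; pow2_field.
Qed.

Definition affine_pieces f bs := forall a b, (a, b) \in pieces bs ->
  exists (k : int) (c : R), forall x, a <= x <= b -> f x = 2 ^ k * x + c.

Lemma affine_pieces_dyadic f a s : sorted <%R (a :: s) ->
  (forall x, x \in a :: s -> dyadic x) -> affine_pieces f (a :: s) ->
  dyadic (f a) -> forall x, x \in a :: s -> dyadic (f x).
Proof.
elim: s a => [|b s IH] a /= hs hd hp hfa x; first by rewrite inE => /eqP ->.
have [ab hs'] := andP hs.
have [k [c hk]] := hp a b (mem_head _ _).
have hfb : dyadic (f b).
  have -> : f b = f a + 2 ^ k * (b - a) by rewrite !hk ?lexx ?ltW //; ring.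
  by apply/dyadicD/dyadic_scale/dyadicB => //; apply: hd; rewrite !inE eqxx ?orbT.
rewrite inE => /orP [/eqP -> // | hx]; apply: (IH b) hx => //.
- by move=> y hy; apply: hd; rewrite inE hy orbT.
- by move=> p q hpq; apply: hp; rewrite /= inE hpq orbT.
Qed.

Lemma mem_pieces (s : seq R) a b : sorted <%R s -> (a, b) \in pieces s ->
  [/\ a \in s, b \in s & a < b].
Proof.
elim: s => [//|x [//|y s] IH] /= /andP [xy hs]; rewrite inE => /orP [/eqP [-> ->] | hab].
  by rewrite !inE !eqxx orbT.
by have [ha hb ab] := IH hs hab; rewrite !inE; move: ha hb; rewrite !inE => -> ->; rewrite !orbT.
Qed.

Lemma eventually_all (T : eqType) (s : seq T) (P : T -> nat -> Prop) :
  (forall t, t \in s -> exists N0, forall N, (N0 <= N)%N -> P t N) ->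
  exists N0, forall t, t \in s -> forall N, (N0 <= N)%N -> P t N.
Proof.
elim: s => [|t0 s IH] h; first by exists 0%N.
have [N1 h1] := h t0 (mem_head _ _).
have [N2 h2] := IH (fun t ht => h t (mem_behead (s := t0 :: s) ht)).
exists (maxn N1 N2) => t; rewrite inE => /orP [/eqP -> | ht] N; rewrite geq_max => /andP [hN1 hN2].
  exact: h1.
exact: h2.
Qed.

Definition dyadic_slope_on N f a b := exists p q : nat,
  [/\ (p <= N)%N, dyadic_at (N + q - p) (f a) &
      forall x, a <= x <= b -> f x = f a + (x - a) * (2 ^+ p / 2 ^+ q)].

Lemma affine_dyadic_slope f a b (k : int) c : dyadic (f a) -> a <= b ->
  (forall x, a <= x <= b -> f x = 2 ^ k * x + c) ->
  exists N0, forall N, (N0 <= N)%N -> dyadic_slope_on N f a b.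
Proof.
move=> /dyadic_atP [n hn] ab hk; have [p [q hpq]] := exprz_pow2_split k.
exists (n + p)%N => N hN; exists p, q; split; first by lia.
  by apply: dyadic_at_le hn; lia.
by move=> x hx; rewrite !hk ?lexx ?ab // hpq; ring.
Qed.

Lemma dyadic_at_cell_lo u b : dyadic_at (size u) b -> b < cell_hi u -> b <= cell_lo u.
Proof.
move=> [m ->]; rewrite ltr_pM2r ?invr_gt0 ?pow2_gt0 // ler_pM2r ?invr_gt0 ?pow2_gt0 //.
by rewrite !pmulrn ltr_int ler_int => h; lia.
Qed.

Lemma cell_in_piece (s : seq R) a u : sorted <%R (a :: s) ->
  (forall x, x \in a :: s -> dyadic_at (size u) x) ->
  a <= cell_lo u -> cell_hi u <= last a s ->
  exists p q, [/\ (p, q) \in pieces (a :: s), p <= cell_lo u & cell_hi u <= q].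
Proof.
elim: s a => [|b s IH] a hs hd al ul.
  by have := lt_le_trans (cell_lo_lt_hi u) ul; rewrite ltNge al.
case: (leP (cell_hi u) b) => ub; first by exists a, b; rewrite /= inE eqxx.
have bl : b <= cell_lo u by apply: dyadic_at_cell_lo ub; apply: hd; rewrite !inE eqxx orbT.
have hd' x : x \in b :: s -> dyadic_at (size u) x.
  by move=> hx; apply: hd; rewrite inE hx orbT.
have [p [q [hpq pl uq]]] := IH b (path_sorted hs) hd' bl ul.
by exists p, q; rewrite /= inE hpq orbT.
Qed.

Definition dyadic_affine_on u f := exists (J : int) (M : nat), forall x, in_cell u x ->
  f x = J%:~R / 2 ^+ M + (x - cell_lo u) * (2 ^+ size u / 2 ^+ M).

Lemma dyadic_slope_cell u f a b : dyadic_slope_on (size u) f a b -> dyadic_at (size u) a ->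
  a <= cell_lo u -> cell_hi u <= b -> dyadic_affine_on u f.
Proof.
move=> [p [q [pN [m em] hf]]] [ia eia] al ub.
set M := (size u + q - p)%N.
have hs : (2 : R) ^+ p / 2 ^+ q = 2 ^+ size u / 2 ^+ M.
  rewrite /M -(subnK pN) -addnBAC ?leq_addl // addnK !exprD; pow2_field.
exists (m + (binval u)%:Z - ia), M => x /andP [lx xh].
rewrite hf ?(le_trans al lx) ?(le_trans xh ub) // hs em eia /cell_lo !intrD intrN -pmulrn.
by pow2_field.
Qed.

Lemma inF_dyadic_affine f : inF f -> exists N, forall u, size u = N -> dyadic_affine_on u f.
Proof.
move=> [f0 [f1 [[|a s] [[hs /= ha hl] [hd hp]]]]]; first by move/eqP: ha; rewrite oner_eq0.
subst a.
have hfd := affine_pieces_dyadic hs hd hp ltac:(by rewrite f0; exists 0, 0%N; rewrite mul0r).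
have [N1 hN1] : exists N0, forall x, x \in 0 :: s -> forall N, (N0 <= N)%N -> dyadic_at N x.
  apply: eventually_all => x /hd /dyadic_atP [n hn].
  by exists n => N hN; exact: dyadic_at_le hN hn.
have [N2 hN2] : exists N0, forall ab, ab \in pieces (0 :: s) ->
    forall N, (N0 <= N)%N -> dyadic_slope_on N f ab.1 ab.2.
  apply: eventually_all => -[a b] hab; have [ha _ ab] := mem_pieces hs hab.
  have [k [c hk]] := hp a b hab; exact: affine_dyadic_slope (hfd a ha) (ltW ab) hk.
exists (maxn N1 N2) => u su.
have hdu x : x \in 0 :: s -> dyadic_at (size u) x.
  by move=> hx; apply: hN1; rewrite // su leq_maxl.
have [|a [b [hab al ub]]] := cell_in_piece hs hdu (cell_lo_ge0 u).
  by rewrite hl cell_hi_le1.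
have [ha _ _] := mem_pieces hs hab.
by apply: dyadic_slope_cell (hN2 _ hab _ _) (hdu _ ha) al ub; rewrite su leq_maxr.
Qed.

Lemma dyadic_affine_increasing u f : dyadic_affine_on u f ->
  increasing_on (cell_lo u) (cell_hi u) f.
Proof.
move=> [J [M hJ]] x y lx xy yh.
have hx : in_cell u x by rewrite /in_cell lx (le_trans (ltW xy) yh).
have hy : in_cell u y by rewrite /in_cell yh (le_trans lx (ltW xy)).
by rewrite !hJ // ltrD2l ltr_pM2r ?divr_gt0 ?pow2_gt0 // ltrD2r.
Qed.

Lemma dyadic_affine_cell u f : dyadic_affine_on u f ->
  0 <= f (cell_lo u) -> f (cell_hi u) <= 1 -> exists v, cell_affine u f v.
Proof.
move=> [J [M hJ]].
have -> : f (cell_lo u) = J%:~R / 2 ^+ M by rewrite hJ ?in_cell_lo // subrr mul0r addr0.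
have -> : f (cell_hi u) = (J + 1)%:~R / 2 ^+ M.
  by rewrite hJ ?in_cell_hi // cell_hiE intrD addrAC subrr add0r; pow2_field.
rewrite ler_pdivlMr ?pow2_gt0 // mul0r ler0z ler_pdivrMr ?pow2_gt0 // mul1r.
rewrite -natr_pow2 pmulrn ler_int.
case: J hJ => [j|//] hJ _ hj.
have [v sv iv] := @binval_surj M j ltac:(lia).
by exists v => x hx; rewrite hJ // /cell_map /cell_lo sv iv -pmulrn.
Qed.

Lemma inF_cellwise f : inF f -> exists N, cellwise N f.
Proof.
move=> hf; have [f0 [f1 _]] := hf; have [N hN] := inF_dyadic_affine hf.
have inc : increasing_on 0 1 f.
  by apply: (@cells_increasing N) => u /hN; exact: dyadic_affine_increasing.
exists N => u /hN hu.
have /andP [l0 l1] := in_cell_in01 (in_cell_lo u).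
have /andP [h0 h1] := in_cell_in01 (in_cell_hi u).
have := dyadic_affine_cell hu; apply.
  by rewrite -f0 (increasing_on_le inc) ?lexx.
by rewrite -f1 (increasing_on_le inc) ?lexx.
Qed.

Lemma inF_inverse f : inF f -> exists2 fi, inF fi & inverse01 f fi.
Proof.
move=> hf; have [f0 [f1 _]] := hf; have [N hN] := inF_cellwise hf.
have [fi hfi] : exists fi, inverse01 f fi.
  apply: (increasing_inverse01 (cellwise_increasing hN) f0 f1) => z hz.
  by apply: cellwise_surj hN _; rewrite f0 f1.
have [M hM] := cellwise_inverse hN hfi.
have [fK _] := hfi.
exists fi => //; apply: cellwise_inF hM _ _.
  by rewrite -{1}f0 (fK _ in01_0).2.
by rewrite -{1}f1 (fK _ in01_1).2.
Qed.

Lemma inF_comp f h : inF f -> inF h -> inF (h \o f).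
Proof.
move=> hf hh; have [f0 [f1 _]] := hf; have [h0 [h1 _]] := hh.
have [N hN] := inF_cellwise hf; have [M hM] := inF_cellwise hh.
by apply: (cellwise_inF (cellwise_comp hN hM)); rewrite /= ?f0 ?h0 ?f1 ?h1.
Qed.

Lemma inF_in01 f x : inF f -> in01 x -> in01 (f x).
Proof. by case/inF_inverse => fi _ [fK _] /fK []. Qed.

Lemma inF_inj f x y : inF f -> in01 x -> in01 y -> f x = f y -> x = y.
Proof.
move=> /inF_inverse [fi _ [fK _]] hx hy e.
by rewrite -(fK x hx).2 e (fK y hy).2.
Qed.

Lemma cell_affine_letters u f v : inF f -> cell_affine u f v ->
  (true \in u) = (true \in v) /\ (false \in u) = (false \in v).
Proof.
move=> hf hv; have [f0 [f1 _]] := hf.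
have flo : f (cell_lo u) = cell_lo v by rewrite hv ?in_cell_lo // cell_map_lo.
have fhi : f (cell_hi u) = cell_hi v by rewrite hv ?in_cell_hi // cell_map_hi.
have lo01 := in_cell_in01 (in_cell_lo u); have hi01 := in_cell_in01 (in_cell_hi u).
split; apply: negb_inj; [rewrite -!cell_lo_eq0 | rewrite -!cell_hi_eq1]; apply/eqP/eqP => e.
- by rewrite -flo e f0.
- by apply: (inF_inj hf lo01 in01_0); rewrite flo f0.
- by rewrite -fhi e f1.
- by apply: (inF_inj hf hi01 in01_1); rewrite fhi f1.
Qed.

(** * Piecewise realization in a generated group *)

Section Generated.
Variable S : (R -> R) -> Prop.
Hypothesis S_inF : forall s, S s -> exists2 h, inF h & forall x, in01 x -> s x = h x.

Lemma gen_comp h1 h2 : gen S h1 -> gen S h2 -> gen S (h2 \o h1).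
Proof.
move=> g1 g2; elim: g1 => [|h h' _ IH e|s h Ss _ IH|s t h Ss Ft ts _ IH].
- exact: gen_ext g2 _.
- by apply: gen_ext IH _ => x hx /=; rewrite e.
- exact: gen_mul Ss IH.
- exact: gen_inv Ss Ft ts IH.
Qed.

Lemma gen_generator s : S s -> gen S s.
Proof. by move=> Ss; exact: gen_mul Ss (gen_id S). Qed.

Lemma gen_iter n h : gen S h -> gen S (iter n h).
Proof. by move=> gh; elim: n => [|n IH]; [exact: gen_id | exact: gen_comp IH gh]. Qed.

Lemma gen_inverse s t : S s -> inF t -> (forall x, in01 x -> t (s x) = x) -> gen S t.
Proof. by move=> Ss Ft ts; exact: gen_inv Ss Ft ts (gen_id S). Qed.

Lemma gen_linv h : gen S h -> exists2 h', gen S h' & forall x, in01 x -> h' (h x) = x.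
Proof.
elim=> [|h0 h1 _ [k gk hk] e|s h0 Ss g0 [k gk hk]|s t h0 Ss Ft ts g0 [k gk hk]].
- by exists id; [exact: gen_id | ].
- by exists k => // x hx; rewrite e // hk.
- have [hs Fhs shs] := S_inF Ss; have [hsi Fhsi [hsK _]] := inF_inverse Fhs.
  have ghsi : gen S hsi by apply: gen_inverse Ss Fhsi _ => x hx; rewrite shs // (hsK _ hx).2.
  exists (hsi \o k); first exact: gen_comp gk ghsi.
  by move=> x hx /=; rewrite hk ?shs ?(hsK _ hx).2 // inF_in01.
- have [hs Fhs shs] := S_inF Ss; have [hsi _ [_ hsiK]] := inF_inverse Fhs.
  exists (s \o k); first exact: gen_comp gk (gen_generator Ss).
  move=> x hx /=; rewrite hk ?inF_in01 //.
  have [hy <-] := hsiK x hx.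
  by rewrite -shs // ts.
Qed.

Definition realized u v := exists2 h, gen S h & cell_affine u h v.

Definition cell_equiv u v := exists D, forall w, (D <= size w)%N -> realized (u ++ w) (v ++ w).

Lemma realized_cell_equiv u v : realized u v -> cell_equiv u v.
Proof. by case=> h gh hh; exists 0%N => w _; exists h => //; exact: cell_affine_cat. Qed.

Lemma cell_equiv_refl u : cell_equiv u u.
Proof.
apply: realized_cell_equiv; exists id; first exact: gen_id.
by move=> x _; rewrite cell_map_id.
Qed.

Lemma cell_equiv_catr u v w : cell_equiv u v -> cell_equiv (u ++ w) (v ++ w).
Proof.
case=> D hD; exists D => w' hw'; rewrite -!catA; apply: hD.
by rewrite size_cat (leq_trans hw') ?leq_addl.
Qed.

Lemma cell_equiv_trans u v w : cell_equiv u v -> cell_equiv v w -> cell_equiv u w.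
Proof.
move=> [D1 h1] [D2 h2]; exists (maxn D1 D2) => w'; rewrite geq_max => /andP [hD1 hD2].
have [k1 g1 e1] := h1 w' hD1; have [k2 g2 e2] := h2 w' hD2.
exists (k2 \o k1); first exact: gen_comp g1 g2.
by move=> x hx /=; rewrite e1 // e2 ?cell_map_comp //; exact: in_cell_map.
Qed.

Lemma cell_equiv_sym u v : cell_equiv u v -> cell_equiv v u.
Proof.
case=> D h; exists D => w hw; have [k gk ek] := h w hw.
have [k' gk' ek'] := gen_linv gk.
exists k' => // x hx; set y := cell_map (v ++ w) (u ++ w) x.
have hy : in_cell (u ++ w) y by exact: in_cell_map.
have -> : x = k y by rewrite ek // cell_mapK.
by rewrite ek' //; exact: in_cell_in01 hy.
Qed.

Section Reduction.
Hypotheses (equiv_00_0 : cell_equiv [:: false; false] [:: false])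
  (equiv_01_10 : cell_equiv [:: false; true] [:: true; false])
  (equiv_1_11 : cell_equiv [:: true] [:: true; true])
  (equiv_010_10 : cell_equiv [:: false; true; false] [:: true; false])
  (equiv_011_110 : cell_equiv [:: false; true; true] [:: true; true; false]).

Lemma equiv_100_10 : cell_equiv [:: true; false; false] [:: true; false].
Proof.
exact: cell_equiv_trans (cell_equiv_sym (cell_equiv_catr [:: false] equiv_01_10)) equiv_010_10.
Qed.

Lemma equiv_101_10 : cell_equiv [:: true; false; true] [:: true; false].
Proof.
apply: cell_equiv_trans (cell_equiv_sym (cell_equiv_catr [:: true] equiv_01_10)) _.
apply: cell_equiv_trans equiv_011_110 _.
exact: cell_equiv_sym (cell_equiv_catr [:: false] equiv_1_11).
Qed.

Lemma cell_equiv_mixed u : true \in u -> false \in u -> cell_equiv u [:: false; true].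
Proof.
have [n] := ubnP (size u); elim: n u => [//|n IH] u hn.
have start10 r : ((size r).+1 < n)%N -> cell_equiv (true :: false :: r) [:: false; true].
  case: r => [_ | c r hr]; first exact: cell_equiv_sym equiv_01_10.
  have e10 : cell_equiv [:: true; false; c] [:: true; false].
    by case: (c); [exact: equiv_101_10 | exact: equiv_100_10].
  by apply: cell_equiv_trans (cell_equiv_catr r e10) (IH _ _ _ _); rewrite /= ?inE ?eqxx ?orbT.
case: u hn => [|[] [|[] r]] //= hn; rewrite ?inE //=.
- move=> _ fr; apply: cell_equiv_trans (cell_equiv_sym (cell_equiv_catr r equiv_1_11)) _.
  by apply: IH; rewrite /= ?inE ?eqxx.
- by move=> _ _; apply: start10.
- move=> _ _; apply: cell_equiv_trans (cell_equiv_catr r equiv_01_10) _.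
  exact: start10.
- move=> tr _; apply: cell_equiv_trans (cell_equiv_catr r equiv_00_0) _.
  by apply: IH; rewrite /= ?inE ?eqxx.
Qed.

Lemma cell_equiv_ones u : true \in u -> false \notin u -> cell_equiv u [:: true].
Proof.
move=> tu /nseq_notin /= e; rewrite e in tu *.
case: (size u) tu => [//|n] _; elim: n => [|n IH]; first exact: cell_equiv_refl.
apply: cell_equiv_trans IH.
exact: cell_equiv_sym (cell_equiv_catr (nseq n true) equiv_1_11).
Qed.

Lemma cell_equiv_zeros u : false \in u -> true \notin u -> cell_equiv u [:: false].
Proof.
move=> fu /nseq_notin /= e; rewrite e in fu *.
case: (size u) fu => [//|n] _; elim: n => [|n IH]; first exact: cell_equiv_refl.
apply: cell_equiv_trans IH.
exact: cell_equiv_catr (nseq n false) equiv_00_0.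
Qed.

Lemma cell_equiv_letters u v : (0 < size u)%N ->
  (true \in u) = (true \in v) -> (false \in u) = (false \in v) -> cell_equiv u v.
Proof.
move=> su tuv fuv.
have [tu|tu] := boolP (true \in u); have [fu|fu] := boolP (false \in u).
- apply: cell_equiv_trans (cell_equiv_mixed tu fu) (cell_equiv_sym (cell_equiv_mixed _ _)).
    by rewrite -tuv.
  by rewrite -fuv.
- apply: cell_equiv_trans (cell_equiv_ones tu fu) (cell_equiv_sym (cell_equiv_ones _ _)).
    by rewrite -tuv.
  by rewrite -fuv.
- apply: cell_equiv_trans (cell_equiv_zeros fu tu) (cell_equiv_sym (cell_equiv_zeros _ _)).
    by rewrite -fuv.
  by rewrite -tuv.
- by case: u {tuv fuv} su tu fu => [|[] u] //; rewrite !inE eqxx.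
Qed.

Lemma inF_Cl_gen f : inF f -> Cl (gen S) f.
Proof.
move=> hf; split => //.
have [N hN] : exists N, cellwise N.+1 f.
  by have [N hN] := inF_cellwise hf; exists N; rewrite -addn1; exact: cellwise_addn.
have [D hD] : exists D, forall u, size u = N.+1 -> exists2 m, (m <= D)%N &
    exists2 v, cell_affine u f v & forall w, (m <= size w)%N -> realized (u ++ w) (v ++ w).
  apply: words_bound => u su; have [v hv] := hN u su.
  have [tuv fuv] := cell_affine_letters hf hv.
  have su0 : (0 < size u)%N by rewrite su.
  by have [m hm] := cell_equiv_letters su0 tuv fuv; exists m, v.
exists (grid_subdiv (N.+1 + D)); split; first exact: grid_subdivP.
move=> a b /grid_subdiv_pieces [u su [-> ->]].
have [|m mD [v hv hr]] := hD (take N.+1 u); first by rewrite size_takel // su leq_addr.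
have [|h gh eh] := hr (drop N.+1 u); first by rewrite size_drop su addKn.
rewrite cat_take_drop in eh.
by exists h; split => // x hx; rewrite (cell_affine_take hv) ?eh.
Qed.

End Reduction.

End Generated.

(** * The generators x0, x1 and the conjugate of x0 x1 *)

(* Split on the comparisons of the piecewise definitions, innermost first. *)
Ltac case_if_le := repeat (match goal with |- context [if ?a <= ?b then _ else _] =>
  lazymatch a with context [if _ then _ else _] => fail | _ => case: (leP a b) => ? end end;
  cbv beta iota).

Definition x0x1 x : R := x1 (x0 x).

Lemma in_cell_num u (a : nat) x : binval u = a ->
  in_cell u x = (a%:R / 2 ^+ size u <= x <= a.+1%:R / 2 ^+ size u).
Proof. by move=> hu; rewrite /in_cell /cell_lo /cell_hi hu. Qed.

Lemma cell_affine_num u v f (a c : nat) : binval u = a -> binval v = c ->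
  (forall x, a%:R / 2 ^+ size u <= x <= a.+1%:R / 2 ^+ size u ->
     f x = c%:R / 2 ^+ size v + (x - a%:R / 2 ^+ size u) * (2 ^+ size u / 2 ^+ size v)) ->
  cell_affine u f v.
Proof. by move=> hu hv hf x; rewrite /in_cell /cell_map /cell_lo /cell_hi hu hv; exact: hf. Qed.

Ltac cell_affine_by a c := apply: (@cell_affine_num _ _ _ a c) => // x;
  rewrite /= !exprS expr0 /x0x1 /x1 /x0 => /andP [? ?]; case_if_le; lra.

Lemma cellwise_x0 : cellwise 2 (@x0 R).
Proof.
move=> [|a [|b []]] // _; case: a b => [] [].
- by exists [:: true; true; true]; cell_affine_by 3%N 7%N.
- by exists [:: true; true; false]; cell_affine_by 2%N 6%N.
- by exists [:: true; false]; cell_affine_by 1%N 2%N.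
- by exists [:: false]; cell_affine_by 0%N 0%N.
Qed.

Lemma cellwise_x1 : cellwise 3 (@x1 R).
Proof.
move=> [|a [|b [|c []]]] // _; case: a b c => [] [] [].
- by exists [:: true; true; true; true]; cell_affine_by 7%N 15%N.
- by exists [:: true; true; true; false]; cell_affine_by 6%N 14%N.
- by exists [:: true; true; false]; cell_affine_by 5%N 6%N.
- by exists [:: true; false]; cell_affine_by 4%N 2%N.
- by exists [:: false; true; true]; cell_affine_by 3%N 3%N.
- by exists [:: false; true; false]; cell_affine_by 2%N 2%N.
- by exists [:: false; false; true]; cell_affine_by 1%N 1%N.
- by exists [:: false; false; false]; cell_affine_by 0%N 0%N.
Qed.

Lemma x0_inF : inF (@x0 R).
Proof. by apply: cellwise_inF cellwise_x0 _ _; rewrite /x0; case_if_le; lra. Qed.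

Lemma x1_inF : inF (@x1 R).
Proof. by apply: cellwise_inF cellwise_x1 _ _; rewrite /x1; case_if_le; lra. Qed.

Lemma x0x1_inF : inF x0x1.
Proof. exact: inF_comp x0_inF x1_inF. Qed.

Ltac unfold_gens := move=> /andP [? ?]; rewrite /x0x1 /x1 /x0; case_if_le; lra.

Lemma x0_high x : 1/2 <= x <= 1 -> x0 x = x / 2 + 1/2.
Proof. by unfold_gens. Qed.

Lemma x0x1_low x : 0 <= x <= 1/4 -> x0x1 x = 2 * x.
Proof. by unfold_gens. Qed.

Lemma x0x1_high x : 1/2 <= x <= 1 -> x0x1 x = x0 (x0 x).
Proof. by unfold_gens. Qed.

Lemma x0x1_mid x : 1/4 <= x <= 1/2 -> 1/2 <= x0x1 x <= 1.
Proof. by move=> hx; apply/andP; split; move: hx; unfold_gens. Qed.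

Lemma iter_x0_high n x : 1/2 <= x <= 1 -> iter n (@x0 R) x = 1 - (1 - x) / 2 ^+ n.
Proof.
move=> hx; elim: n => [|n IH]; first by rewrite expr0 divr1 /=; ring.
have p := pow2_ge1 n.
have h : 0 <= (1 - x) / 2 ^+ n <= 1 - x.
  apply/andP; split; first by rewrite divr_ge0 //; lra.
  by rewrite ler_pdivrMr ?pow2_gt0 //; apply: ler_peMr => //; lra.
by rewrite iterS IH x0_high; [rewrite exprS; pow2_field | apply/andP; split; lra].
Qed.

Lemma iter_x0_high_mem n x : 1/2 <= x <= 1 -> 1/2 <= iter n (@x0 R) x <= 1.
Proof.
move=> hx; elim: n => [//|n IH]; rewrite iterS x0_high //.
by move: IH => /andP [? ?]; apply/andP; split; lra.
Qed.

Section LeftInverse.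
Variable k : R -> R.
Hypothesis kx0 : forall x, in01 x -> k (x0 x) = x.

Lemma linv_x0_iter n x : 0 <= x <= 1/2 -> iter n k x = x / 2 ^+ n.
Proof.
move=> /andP [xge0 xle]; elim: n => [|n IH]; first by rewrite expr0 divr1.
have hn : 0 <= x / 2 ^+ n <= 1/2.
  apply/andP; split; first by rewrite divr_ge0 // ltW // pow2_gt0.
  by apply: le_trans xle; rewrite ler_pdivrMr ?pow2_gt0 //; apply: ler_peMr => //; exact: pow2_ge1.
have [h0 h1] := andP hn.
have e : x0 (x / 2 ^+ n / 2) = x / 2 ^+ n by rewrite /x0; case_if_le; lra.
by rewrite iterS IH -{1}e kx0 ?exprSr ?invfM ?mulrA // /in01; apply/andP; split; lra.
Qed.

Lemma linv_iter_x0 n x : in01 x -> iter n k (iter n (@x0 R) x) = x.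
Proof.
move=> hx; elim: n => [//|n IH]; rewrite iterSr iterS kx0 //.
by elim: n {IH} => [//|n IH]; rewrite iterS; exact: inF_in01 x0_inF IH.
Qed.

End LeftInverse.

Lemma div_pow2D_le x a b : 0 <= x <= 1 -> x / 2 ^+ (a + b) <= 1 / 2 ^+ a.
Proof.
move=> /andP [x0 x1]; rewrite exprD invfM [_^-1 * _]mulrC mulrA ler_pM2r ?invr_gt0 ?pow2_gt0 //.
by rewrite ler_pdivrMr ?pow2_gt0 // mul1r (le_trans x1) ?pow2_ge1.
Qed.

Section Conjugate.
Variables g ginv : R -> R.
Hypotheses (g_inF : inF g) (ginv_inF : inF ginv) (g_inv : inverse01 g ginv).

Definition x0x1g z := g (x0x1 (ginv z)).

Lemma x0x1g_g x : in01 x -> x0x1g (g x) = g (x0x1 x).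
Proof. by move=> hx; rewrite /x0x1g (g_inv.1 x hx).2. Qed.

Lemma x0x1g_inF : inF x0x1g.
Proof. exact: inF_comp (inF_comp ginv_inF x0x1_inF) g_inF. Qed.

Lemma Hgens_inF s : Hgens g s -> exists2 h, inF h & forall x, in01 x -> s x = h x.
Proof.
case=> hs; first by exists (@x0 R); [exact: x0_inF | ].
exists x0x1g => [|z hz]; first exact: x0x1g_inF.
by have [hy <-] := g_inv.2 z hz; rewrite hs // x0x1g_g.
Qed.

Lemma gen_x0 : gen (Hgens g) (@x0 R).
Proof. by apply: gen_generator; left. Qed.

Lemma gen_x0x1g : gen (Hgens g) x0x1g.
Proof. by apply: gen_generator; right => x hx; exact: x0x1g_g. Qed.

Lemma g_mul_pow2 n x : 0 <= x -> x * 2 ^+ n <= 1/2 -> g (x * 2 ^+ n) = iter n x0x1g (g x).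
Proof.
move=> xge0; elim: n => [|n IH]; first by rewrite expr0 mulr1.
rewrite exprS mulrCA => h.
have p : 0 <= x * 2 ^+ n by rewrite mulr_ge0 // ltW // pow2_gt0.
rewrite iterS -IH; last by lra.
by rewrite x0x1g_g ?x0x1_low //; apply/andP; split; lra.
Qed.

Lemma g_iter_x0 n x : 1/2 <= x <= 1 -> g (iter (n + n) (@x0 R) x) = iter n x0x1g (g x).
Proof.
move=> hx; elim: n => [//|n IH].
have /andP [h1 h2] := iter_x0_high_mem (n + n) hx.
rewrite addSn addnS !iterS -IH x0x1g_g ?x0x1_high //; first by apply/andP; split.
by rewrite /in01; apply/andP; split; lra.
Qed.

Lemma g_lower_half : exists n k, forall x, 0 <= x <= 1/2 -> g x = iter n x0x1g (x / 2 ^+ k).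
Proof.
have [N hN] := inF_cellwise g_inF; have [g0 _] := g_inF.
have [m hm] := cellwise_near0 hN g0.
exists (N + m)%N, (m + m)%N => x /andP [xge0 xle].
have s0 : 0 <= x / 2 ^+ (N + m) by rewrite divr_ge0 // ltW // pow2_gt0.
rewrite -{1}[x](divfK (pow2_neq0 (N + m))) g_mul_pow2 ?divfK ?pow2_neq0 //.
rewrite hm; first by congr iter; rewrite !exprD; pow2_field.
by rewrite s0 div_pow2D_le //; apply/andP; split; lra.
Qed.

Lemma g_upper_half : exists n k, forall x, 1/2 <= x <= 1 -> iter n x0x1g (g x) = iter k (@x0 R) x.
Proof.
have [N hN] := inF_cellwise g_inF; have [_ [g1 _]] := g_inF.
have [m hm] := cellwise_near1 hN g1.
exists N, (N + m)%N => x hx; have [h1 h2] := andP hx.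
have hw : 0 <= 1 - x <= 1 by apply/andP; split; lra.
have q := div_pow2D_le N N hw; have p := pow2_gt0 (N + N).
have w0 : 0 <= (1 - x) / 2 ^+ (N + N) by apply: divr_ge0; lra.
rewrite -g_iter_x0 // iter_x0_high // hm; last by apply/andP; split; lra.
by rewrite iter_x0_high // !exprD; pow2_field.
Qed.

Lemma gen_x0x1_quarter : exists2 W, gen (Hgens g) W & forall x, 1/4 <= x <= 1/2 -> W x = x0x1 x.
Proof.
have [k gk kx0] := gen_linv Hgens_inF gen_x0.
have [n [j hlow]] := g_lower_half; have [n' [P hhigh]] := g_upper_half.
exists (fun x => iter P k (iter n' x0x1g (x0x1g (iter n x0x1g (iter j k x))))).
  apply: (gen_comp _ (gen_iter P gk)); apply: (gen_comp _ (gen_iter n' gen_x0x1g)).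
  apply: (gen_comp _ gen_x0x1g); apply: (gen_comp _ (gen_iter n gen_x0x1g)).
  exact: (gen_iter j gk).
move=> x hx; have [h1 h2] := andP hx; have /andP [X1 X2] := x0x1_mid hx.
have e : iter n x0x1g (iter j k x) = g x.
  by rewrite [iter j k x]linv_x0_iter ?hlow //; apply/andP; split; lra.
by rewrite /= e x0x1g_g ?hhigh ?linv_iter_x0 // /in01; apply/andP; split; lra.
Qed.

Lemma Hgens_base_equiv :
  [/\ cell_equiv (Hgens g) [:: false; false] [:: false],
      cell_equiv (Hgens g) [:: false; true] [:: true; false],
      cell_equiv (Hgens g) [:: true] [:: true; true],
      cell_equiv (Hgens g) [:: false; true; false] [:: true; false] &
      cell_equiv (Hgens g) [:: false; true; true] [:: true; true; false]].
Proof.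
have [W gW eW] := gen_x0x1_quarter.
have quarter u x : in_cell ([:: false; true] ++ u) x -> 1/4 <= x <= 1/2.
  move=> /in_cell_catl; rewrite (@in_cell_num _ 1%N) // /= !exprS expr0.
  by move=> /andP [? ?]; apply/andP; split; lra.
split; apply: realized_cell_equiv.
- by exists (@x0 R); [exact: gen_x0 | cell_affine_by 0%N 0%N].
- by exists (@x0 R); [exact: gen_x0 | cell_affine_by 1%N 2%N].
- by exists (@x0 R); [exact: gen_x0 | cell_affine_by 1%N 3%N].
- have hX : cell_affine [:: false; true; false] x0x1 [:: true; false].
    by cell_affine_by 2%N 2%N.
  by exists W => // x hx; rewrite eW ?hX // (quarter [:: false]).
- have hX : cell_affine [:: false; true; true] x0x1 [:: true; true; false].
    by cell_affine_by 3%N 6%N.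
  by exists W => // x hx; rewrite eW ?hX // (quarter [:: true]).
Qed.

End Conjugate.

End Thompson.

Theorem lemma3p2 (R : realType) (g : R -> R) :
  inF g -> forall f : R -> R, Cl (gen (Hgens g)) f <-> inF f.
Proof.
move=> hg f; split => [[] // | hf].
have [ginv Fginv hginv] := inF_inverse hg.
have [e00 e01 e1 e010 e011] := Hgens_base_equiv hg Fginv hginv.
exact: (inF_Cl_gen (Hgens_inF hg Fginv hginv) e00 e01 e1 e010 e011).
Qed.
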